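(* Let $\Gamma$ be a semi-nice permutation group of a countable set $\mathbb{V}$ and let $X$ be a $(\mathbb{V},\Gamma)$-process with $H(X_v)<\infty$. Then for every co-Følner sequence $(V_n)_{n\ge1}$ in $\mathbb{V}$, \[ h(X)=\lim_{n\to\infty}\frac{H(X_{V_n})}{|V_n|}. \]
   Context: $\Gamma$ acts by $g(x)_v=x_{g^{-1}(v)}$; a $(\mathbb{V},\Gamma)$-process is a random element of $\mathcal{A}^\mathbb{V}$ with $\Gamma$-invariant law. Semi-nice: transitive action and $|\Gamma_v w|<\infty$ for all $v,w$ ($\Gamma_v$ the stabilizer). $h(X)=\inf\{H(X_V)/|V|:V\subset\mathbb{V}\text{ finite nonempty}\}$, $H$ Shannon entropy. For $V\subset\mathbb{V}$ and $v_0,v_1\in\mathbb{V}$ let $\partial^{v_0}_{v_1}V=\{g\in\Gamma: g(v_0)\in V,\ g(v_1)\notin V\}v_0$. A sequence $(V_n)$ of finite subsets of $\mathbb{V}$ is co-Følner if $|\partial^{v_0}_{v_1}V_n|/|V_n|\to0$ and $|\partial^{v_0}_{v_1}(\mathbb{V}\setminus V_n)|/|V_n|\to0$ for all $v_0,v_1\in\mathbb{V}$. *)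

From HB Require Import structures.
From mathcomp Require Import all_boot all_order all_algebra finmap.
From mathcomp Require Import all_classical all_reals all_analysis.
Set Implicit Arguments. Unset Strict Implicit. Unset Printing Implicit Defensive.
Import Order.TTheory GRing.Theory Num.Theory numFieldNormedType.Exports.
Local Open Scope classical_set_scope.
Local Open Scope ring_scope.
Local Open Scope fset_scope.

Section Defs.
Variable V : countType.

Definition perm_group (G : set (V -> V)) : Prop :=
  [/\ (forall g, G g -> bijective g),
      G id,
      (forall g h, G g -> G h -> G (g \o h)) &
      (forall g, G g -> exists2 h, G h & cancel g h /\ cancel h g)].

Definition semi_nice (G : set (V -> V)) : Prop :=
  (forall v w : V, exists2 g, G g & g v = w) /\
  (forall v w : V, finite_set [set g w | g in [set g | G g /\ g v = v]]).

Definition bdry (G : set (V -> V)) (v0 v1 : V) (W : set V) : set V :=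
  [set g v0 | g in [set g | G g /\ W (g v0) /\ ~ W (g v1)]].

(* co-Folner sequence (the sets V_n are finite and nonempty so that the
   ratios make sense; an infinite boundary makes the ratio infinite, hence
   we require the boundaries to be eventually finite) *)
Definition coFolner (R : realType) (G : set (V -> V)) (Vn : nat -> {fset V}) : Prop :=
  (forall n, Vn n != fset0) /\
  forall v0 v1 : V,
    (\forall n \near \oo, finite_set (bdry G v0 v1 [set` Vn n])) /\
    (\forall n \near \oo, finite_set (bdry G v0 v1 (~` [set` Vn n]))) /\
    ((fun n => (#|` fset_set (bdry G v0 v1 [set` Vn n])|%:R / #|` Vn n|%:R : R))
       @ \oo --> (0 : R)) /\
    ((fun n => (#|` fset_set (bdry G v0 v1 (~` [set` Vn n]))|%:R / #|` Vn n|%:R : R))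
       @ \oo --> (0 : R)).

Variable A : countType.
Variables (d : measure_display) (Omega : measurableType d) (R : realType).

Definition random_field (X : V -> Omega -> A) : Prop :=
  forall v a, measurable (X v @^-1` [set a]).

(* the law of X is G-invariant: g(X)_v = X_{g^{-1} v} has the same law as X
   (equality on all cylinder sets, which generate the product sigma-algebra) *)
Definition invariant_law (G : set (V -> V)) (P : probability Omega R)
    (X : V -> Omega -> A) : Prop :=
  forall g ginv, G g -> cancel g ginv -> cancel ginv g ->
  forall (W : {fset V}) (f : V -> A),
    P [set w | forall v, v \in W -> X (ginv v) w = f v] =
    P [set w | forall v, v \in W -> X v w = f v].

Definition process (G : set (V -> V)) (P : probability Omega R)
    (X : V -> Omega -> A) : Prop :=
  random_field X /\ invariant_law G P X.

Definition cyl (X : V -> Omega -> A) (W : {fset V}) (x : {ffun W -> A}) : set Omega :=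
  [set w | forall i : W, X (val i) w = x i].

(* Shannon entropy (natural log, 0 log 0 = 0) of X_W, in [0, +oo] *)
Definition Hent (P : probability Omega R) (X : V -> Omega -> A) (W : {fset V})
  : \bar R :=
  \esum_(x in [set: {ffun W -> A}])
     (- (fine (P (cyl X x)) * ln (fine (P (cyl X x)))))%:E.

Definition hrate (P : probability Omega R) (X : V -> Omega -> A) : \bar R :=
  ereal_inf [set (Hent P X W * ((#|` W|%:R)^-1)%:E)%E | W in [set W : {fset V} | W != fset0]].

End Defs.

From HB Require Import structures.
From mathcomp Require Import all_boot all_order all_algebra finmap.
From mathcomp Require Import all_classical all_reals all_analysis.
From mathcomp Require Import ring lra.
Import Order.TTheory GRing.Theory Num.Theory numFieldNormedType.Exports.
Local Open Scope classical_set_scope.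
Local Open Scope ring_scope.
Local Open Scope fset_scope.

(* S |-> H(X_S) is monotone, submodular (by Gibbs' inequality), invariant under
   the group and vanishes on the empty set; since h(X) is the infimum of
   H(X_W)/|W|, only the upper bound on H(X_{V_n})/|V_n| needs proof.  Fix W and
   v0, and attach to every anchor u the N translates g W with g v0 = u; by
   transitivity every point lies in the same number c of anchored translates.
   The translates anchored in V_n or in its outer boundary cover V_n c times, so
   Shearer's inequality gives c H(X_{V_n}) <= (|V_n| + |outer|) N H(X_W), while
   those anchored in V_n off its inner boundary lie inside V_n, which gives
   (|V_n| - |inner|) N |W| <= |V_n| c (c need not equal N |W|, as the group need
   not be unimodular).  Hence H(X_{V_n})/|V_n| <= H(X_W)/|W| (1 + o(1)). *)

Section esum_lemmas.
Context {R : realType} {T : choiceType}.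
Local Open Scope ereal_scope.

Lemma esumZl (I : set T) (a : T -> \bar R) (k : R) : (0 <= k)%R ->
  (forall i, I i -> 0 <= a i) ->
  \esum_(i in I) (k%:E * a i) = k%:E * \esum_(i in I) a i.
Proof.
move=> k0 a0; have [->|kn0] := eqVneq k 0%R.
  by rewrite mul0e; apply: esum1 => i _; rewrite mul0e.
rewrite /esum -ereal_sup_pZl ?lt_def ?kn0// image_comp; congr ereal_sup.
apply: eq_imagel => F [finF FI] /=.
rewrite !fsbig_finite//= !big_seq ge0_sume_distrr// => i.
by rewrite in_fset_set// inE => /FI/a0.
Qed.

Lemma ge0_subset_esum (I J : set T) (a : T -> \bar R) :
  (I `<=` J)%classic -> (forall i, J i -> 0 <= a i) ->
  \esum_(i in I) a i <= \esum_(i in J) a i.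
Proof.
move=> IJ a0; rewrite esum_mkcond [leRHS]esum_mkcond; apply: le_esum => i _.
case: ifPn => [/set_mem/IJ Ji|_]; first by rewrite ifT// inE.
by case: ifPn => // /set_mem; exact: a0.
Qed.

Lemma esum_fibers {T' : choiceType} (f : T -> T') (a : T -> \bar R) :
  (forall t, 0 <= a t) ->
  \esum_(s in [set: T']) \esum_(t in f @^-1` [set s]) a t = \esum_(t in [set: T]) a t.
Proof.
move=> a0; rewrite esum_esum// (reindex_esum [set: T] _ (fun t => (f t, t)))//.
split=> [t _ //|x y _ _ []//|[s t] [_ /= <-]]; by exists t.
Qed.

End esum_lemmas.

Section discrete_entropy.
Local Set Implicit Arguments. Local Unset Strict Implicit.
Context {d : measure_display} {Omega : measurableType d} {R : realType}
  (P : probability Omega R).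
Local Open Scope ereal_scope.

Definition negxlnx (x : R) : R := - (x * ln x).

Definition measurable_fibers (T : countType) (Y : Omega -> T) :=
  forall t, measurable (Y @^-1` [set t]).

Definition pmass (T : countType) (Y : Omega -> T) (t : T) : R :=
  fine (P (Y @^-1` [set t])).

Definition entropy (T : countType) (Y : Omega -> T) : \bar R :=
  \esum_(t in [set: T]) (negxlnx (pmass Y t))%:E.

Lemma negxlnx_ge0 x : (0 <= x <= 1)%R -> (0 <= negxlnx x)%R.
Proof. by move=> /andP[x0 x1]; rewrite /negxlnx -mulrN mulr_ge0// oppr_ge0 ln_le0. Qed.

Section fibers.
Variables (T : countType) (Y : Omega -> T).
Hypothesis mY : measurable_fibers Y.

(* enumerating [T] turns [Y @^-1` D] into a disjoint union indexed by [nat] *)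
Let fiber (D : set T) (n : nat) : set Omega :=
  if choice.pickle_inv n is Some t then (if t \in D then Y @^-1` [set t] else set0)
  else set0.

Let measurable_fiber D n : measurable (fiber D n).
Proof. by rewrite /fiber; case: (choice.pickle_inv n) => // t; case: ifP. Qed.

Let preimage_bigcup_fiber D : Y @^-1` D = \bigcup_n fiber D n.
Proof.
apply/seteqP; split => [w Dw|w [n _]].
  exists (choice.pickle (Y w)) => //.
  by rewrite /fiber choice.pickleK_inv ifT//; exact: mem_set.
rewrite /fiber; case: (choice.pickle_inv n) => [t|] //; case: ifP => // /set_mem Dt /= Yt.
by rewrite /preimage /= Yt.
Qed.

Let trivIset_fiber D : trivIset setT (fiber D).
Proof.
move=> i j _ _ [w []]; rewrite /fiber.
case Ei: (choice.pickle_inv i) => [ti|] //; case Ej: (choice.pickle_inv j) => [tj|] //.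
case: ifP => // _ /= Yi; case: ifP => // _ /= Yj.
have := @choice.pickle_invK T i; have := @choice.pickle_invK T j.
by rewrite Ei Ej /= => <- <-; rewrite -Yi -Yj.
Qed.

Lemma measurable_preimage D : measurable (Y @^-1` D).
Proof. by rewrite preimage_bigcup_fiber; exact: bigcupT_measurable. Qed.

Lemma measure_preimage_esum D :
  P (Y @^-1` D) = \esum_(t in D) P (Y @^-1` [set t]).
Proof.
rewrite preimage_bigcup_fiber measure_bigcup//= nneseries_esum//.
transitivity (\esum_(j in choice.pickle @` D) P (fiber D j)); last first.
  rewrite esum_image; last by move=> x y _ _; exact: (pcan_inj (@choice.pickleK T)).
  by apply: eq_esum => t Dt; rewrite /fiber choice.pickleK_inv ifT//; exact: mem_set.
rewrite esum_mkcond [RHS]esum_mkcond; apply: eq_esum => i _.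
rewrite ifT; last by rewrite inE /= inE.
case: ifPn => [//|Ni]; rewrite /fiber.
case Ei: (choice.pickle_inv i) => [t|]; last exact: measure0.
case: ifP => [/set_mem Dt|]; last by rewrite measure0.
exfalso; apply: (negP Ni); apply: mem_set; exists t => //.
by have := @choice.pickle_invK T i; rewrite Ei.
Qed.

Lemma pmassE t : P (Y @^-1` [set t]) = (pmass Y t)%:E.
Proof. by rewrite /pmass fineK// fin_num_measure. Qed.

Lemma pmass_itv t : (0 <= pmass Y t <= 1)%R.
Proof. by rewrite -!lee_fin -pmassE measure_ge0 probability_le1. Qed.

Lemma esum_pmass : \esum_(t in [set: T]) (pmass Y t)%:E = 1.
Proof.
by rewrite -(eq_esum (fun t _ => pmassE t)) -measure_preimage_esum probability_setT.
Qed.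

Lemma measurable_fibers_comp (T' : countType) (f : T -> T') :
  measurable_fibers (f \o Y).
Proof. by move=> s; exact: (measurable_preimage (f @^-1` [set s])). Qed.

Lemma pmass_ge0 t : (0 <= pmass Y t)%R.
Proof. by case/andP: (pmass_itv t). Qed.

Lemma ln_pmass_le0 t : (ln (pmass Y t) <= 0)%R.
Proof. by rewrite ln_le0//; case/andP: (pmass_itv t). Qed.

Lemma entropy_ge0 : 0 <= entropy Y.
Proof. by apply: esum_ge0 => t _; rewrite lee_fin negxlnx_ge0// pmass_itv. Qed.

End fibers.

Lemma pmass_le_comp (T T' : countType) (Y : Omega -> T) (f : T -> T') t :
  measurable_fibers Y -> (pmass Y t <= pmass (f \o Y) (f t))%R.
Proof.
move=> mY; have mfY := measurable_fibers_comp mY f.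
rewrite -lee_fin -pmassE// -pmassE//.
by apply: le_measure; rewrite ?inE//; move=> w /= ->.
Qed.

Lemma entropy_compE (T T' : countType) (Y : Omega -> T) (f : T -> T') :
  measurable_fibers Y ->
  entropy (f \o Y) =
    \esum_(t in [set: T]) ((- ln (pmass (f \o Y) (f t))) * pmass Y t)%:E.
Proof.
move=> mY; have mfY := measurable_fibers_comp mY f.
have lnf_ge0 s : (0 <= - ln (pmass (f \o Y) s))%R by rewrite oppr_ge0 ln_pmass_le0.
rewrite /entropy -(esum_fibers f); last by move=> t; rewrite lee_fin mulr_ge0 ?pmass_ge0.
apply: eq_esum => s _.
under eq_esum => t /= -> do rewrite EFinM.
rewrite esumZl//; last by move=> t _; rewrite lee_fin pmass_ge0.
rewrite -(eq_esum (fun t _ => pmassE mY t)) -measure_preimage_esum// -/(preimage _ _).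
by rewrite -comp_preimage pmassE// -EFinM /negxlnx mulrC mulNr.
Qed.

Lemma entropy_comp_le (T T' : countType) (Y : Omega -> T) (f : T -> T') :
  measurable_fibers Y -> entropy (f \o Y) <= entropy Y.
Proof.
move=> mY; have mfY := measurable_fibers_comp mY f.
rewrite entropy_compE//; apply: le_esum => t _; rewrite lee_fin /negxlnx mulrC -mulrN.
have [->|pt0] := eqVneq (pmass Y t) 0%R; first by rewrite !mul0r.
have pt_gt0 : (0 < pmass Y t)%R by rewrite lt_def pt0 pmass_ge0.
have pt_le := pmass_le_comp f t mY.
by rewrite ler_pM2l// lerN2 ler_ln ?posrE// (lt_le_trans pt_gt0).
Qed.

Lemma mul_ln_div_le (p q : R) : (0 < p)%R -> (0 < q)%R -> (p * ln (q / p) <= q - p)%R.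
Proof.
move=> p0 q0; have := @le_ln1Dx R (q / p - 1) ltac:(rewrite ltrBrDl subrr divr_gt0//).
rewrite addrC subrK -(ler_pM2l p0) mulrBr mulr1 => /le_trans; apply.
by rewrite mulrC divfK// gt_eqF.
Qed.

Lemma measurable_fibers_pair (T1 T2 : countType) (Y : Omega -> T1)
    (Z : Omega -> T2) :
  measurable_fibers Y -> measurable_fibers Z ->
  measurable_fibers (fun w => (Y w, Z w)).
Proof.
move=> mY mZ [y z].
rewrite (_ : _ @^-1` _ = (Y @^-1` [set y] `&` Z @^-1` [set z])%classic).
  exact: measurableI.
by apply/seteqP; split => w /=; case=> <- <-.
Qed.

Section entropy_submodular.
Variables (T1 T2 T3 : countType) (Y : Omega -> T1) (Z : Omega -> T2).
Variables (f : T1 -> T3) (g : T2 -> T3).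
Hypotheses (mY : measurable_fibers Y) (mZ : measurable_fibers Z).
Hypothesis fY_gZ : forall w, f (Y w) = g (Z w).

Let YZ w := (Y w, Z w).

Let mYZ : measurable_fibers YZ := measurable_fibers_pair mY mZ.

Let mfY : measurable_fibers (f \o Y) := measurable_fibers_comp mY f.

Let p := pmass YZ.
Let a := pmass Y.
Let b := pmass Z.
Let c := pmass (f \o Y).

(* [q] is the law of a copy of [(Y, Z)] made conditionally independent given [f Y] *)
Let q (k : T1 * T2) : R :=
  if f k.1 == g k.2 then (a k.1 * b k.2 / c (f k.1))%R else 0%R.

Let q_ge0 k : (0 <= q k)%R.
Proof. by rewrite /q; case: ifP => // _; rewrite divr_ge0 ?mulr_ge0 ?pmass_ge0. Qed.

Let esum_q_le1 : \esum_(k in [set: T1 * T2]) (q k)%:E <= 1.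
Proof.
have -> : [set: T1 * T2] = [set: T1] `*`` fun=> [set: T2] by apply/seteqP.
rewrite -(esum_pmass mY) -(esum_esum (a := fun y z => (q (y, z))%:E)); last first.
  by move=> *; rewrite lee_fin.
apply: le_esum => y _.
have -> : \esum_(z in [set: T2]) (q (y, z))%:E =
    ((a y / c (f y))%R)%:E * \esum_(z in g @^-1` [set f y]) P (Z @^-1` [set z]).
  rewrite -esumZl ?divr_ge0 ?pmass_ge0//.
  rewrite [RHS]esum_mkcond; apply: eq_esum => z _ /=; rewrite /q /=.
  case: (boolP (z \in g @^-1` [set f y])) => [/set_mem/= -> | gz].
    by rewrite eqxx pmassE// -EFinM mulrAC.
  by rewrite ifN//; apply: contra gz => /eqP ->; exact: mem_set.
rewrite -(measure_preimage_esum mZ) -comp_preimage.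
rewrite (_ : g \o Z = f \o Y); last by apply/funext => w /=; rewrite fY_gZ.
rewrite pmassE// -EFinM lee_fin -/c.
have [->|cy0] := eqVneq (c (f y)) 0%R; last by rewrite divfK.
by rewrite invr0 !mulr0 pmass_ge0.
Qed.

Let p_support k : (0 < p k)%R -> f k.1 = g k.2.
Proof.
move=> pk; have : YZ @^-1` [set k] !=set0.
  apply/set0P; apply: contraTneq pk => E.
  by rewrite /p /pmass E measure0 /= ltxx.
by case=> w /= <-; rewrite fY_gZ.
Qed.

Let gibbs_pointwise k :
  (negxlnx (p k) + (- ln (c (f k.1))) * p k + p k <=
   (- ln (a k.1)) * p k + (- ln (b k.2)) * p k + q k)%R.
Proof.
have [->|pk0] := eqVneq (p k) 0%R.
  by rewrite /negxlnx !(mul0r, mulr0) oppr0 !add0r.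
have pk : (0 < p k)%R by rewrite lt_def pk0 pmass_ge0.
have pa : (p k <= a k.1)%R := pmass_le_comp fst k mYZ.
have pb : (p k <= b k.2)%R := pmass_le_comp snd k mYZ.
have pc : (p k <= c (f k.1))%R := pmass_le_comp (f \o fst) k mYZ.
have [a0 b0 c0] : [/\ 0 < a k.1, 0 < b k.2 & 0 < c (f k.1)]%R.
  by split; apply: lt_le_trans pk _.
have := mul_ln_div_le pk (divr_gt0 (mulr_gt0 a0 b0) c0).
rewrite /q -(p_support pk) eqxx !ln_div ?lnM ?posrE ?divr_gt0 ?mulr_gt0//.
rewrite /negxlnx; lra.
Qed.

Lemma entropy_submod : entropy YZ + entropy (f \o Y) <= entropy Y + entropy Z.
Proof.
have HY : entropy Y = \esum_(k in [set: T1 * T2]) ((- ln (a k.1)) * p k)%:E :=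
  entropy_compE fst mYZ.
have HZ : entropy Z = \esum_(k in [set: T1 * T2]) ((- ln (b k.2)) * p k)%:E :=
  entropy_compE snd mYZ.
have HW : entropy (f \o Y) =
    \esum_(k in [set: T1 * T2]) ((- ln (c (f k.1))) * p k)%:E :=
  entropy_compE (f \o fst) mYZ.
suff : entropy YZ + entropy (f \o Y) + 1 <= entropy Y + entropy Z + 1 by rewrite leeD2rE.
apply: le_trans (leeD2l _ esum_q_le1).
rewrite -{1}(esum_pmass mYZ) HY HZ HW /entropy -!esumD.
- by apply: le_esum => k _; rewrite -!EFinD lee_fin; exact: gibbs_pointwise.
all: move=> k _; rewrite -?EFinD lee_fin.
all: by rewrite ?addr_ge0 ?mulr_ge0 ?negxlnx_ge0 ?pmass_itv ?oppr_ge0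
  ?ln_pmass_le0 ?pmass_ge0.
Qed.
End entropy_submodular.
End discrete_entropy.

Section marginal_entropy.
Context {V A : countType} {d : measure_display} {Omega : measurableType d}
  {R : realType} (P : probability Omega R) (X : V -> Omega -> A).
Hypothesis mX : random_field X.
Local Open Scope ereal_scope.

Definition marginal (S : {fset V}) (w : Omega) : {ffun S -> A} :=
  [ffun i => X (val i) w].

(* outside of [S] the value is junk: [X v point] is merely some element of [A] *)
Definition cfg_at {S : {fset V}} (x : {ffun S -> A}) (v : V) : A :=
  if insub v is Some i then x i else X v point.

Definition restrict {S : {fset V}} (S' : {fset V}) (x : {ffun S -> A}) : {ffun S' -> A} :=
  [ffun i => cfg_at x (val i)].

Definition merge {S S' : {fset V}} (xy : {ffun S -> A} * {ffun S' -> A}) :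
    {ffun S `|` S' -> A} :=
  [ffun i => if val i \in S then cfg_at xy.1 (val i) else cfg_at xy.2 (val i)].

Lemma cfg_at_val (S : {fset V}) (x : {ffun S -> A}) (i : S) :
  cfg_at x (val i) = x i.
Proof. by rewrite /cfg_at valK. Qed.

Lemma cfg_at_marginal (S : {fset V}) w v :
  v \in S -> cfg_at (marginal S w) v = X v w.
Proof. by move=> vS; rewrite /cfg_at insubT /= ffunE. Qed.

Lemma restrict_marginal (S S' : {fset V}) w :
  S' `<=` S -> restrict S' (marginal S w) = marginal S' w.
Proof.
move=> S'S; apply/ffunP => i; rewrite !ffunE cfg_at_marginal//.
exact: fsubsetP S'S _ (fsvalP i).
Qed.

Lemma merge_marginal (S S' : {fset V}) w :
  merge (marginal S w, marginal S' w) = marginal (S `|` S') w.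
Proof.
apply/ffunP => i; rewrite !ffunE /=; case: ifP => iS; first by rewrite cfg_at_marginal.
by rewrite cfg_at_marginal//; move: (fsvalP i); rewrite in_fsetU iS.
Qed.

Lemma measurable_fibers_marginal S : measurable_fibers (marginal S).
Proof.
move=> x; rewrite (_ : _ @^-1` _ = \bigcap_(i in [set: S]) X (val i) @^-1` [set x i]).
  by apply: fin_bigcap_measurable => // i _; exact: mX.
apply/seteqP; split => [w <- i _|w Hw]; first by rewrite /= ffunE.
by apply/ffunP => i; rewrite ffunE; exact: Hw.
Qed.

Lemma Hent_marginal S : Hent P X S = entropy P (marginal S).
Proof.
rewrite /Hent /entropy; apply: eq_esum => x _; congr (_%:E).
rewrite /negxlnx /pmass; congr (- (fine (P _) * ln (fine (P _))))%R.
all: apply/seteqP; split => [w Hw|w <- i]; last by rewrite ffunE.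
all: by apply/ffunP => i; rewrite ffunE; exact: Hw.
Qed.

Lemma Hent_ge0 S : 0 <= Hent P X S.
Proof. by rewrite Hent_marginal; exact/entropy_ge0/measurable_fibers_marginal. Qed.

Lemma Hent_fset0 : Hent P X fset0 = 0.
Proof.
rewrite Hent_marginal /entropy esum1// => x _.
rewrite /pmass (_ : _ @^-1` _ = setT) ?probability_setT /= /negxlnx ?ln1 ?mulr0 ?oppr0//.
by apply/seteqP; split => // w _; apply/ffunP => i; have := fsvalP i; rewrite in_fset0.
Qed.

Lemma le_Hent (S S' : {fset V}) : S `<=` S' -> Hent P X S <= Hent P X S'.
Proof.
move=> SS'; rewrite !Hent_marginal.
rewrite (_ : marginal S = restrict S \o marginal S'); last first.
  by apply/funext => w /=; rewrite restrict_marginal.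
exact/entropy_comp_le/measurable_fibers_marginal.
Qed.

Lemma Hent_submod (S S' : {fset V}) :
  Hent P X (S `|` S') + Hent P X (S `&` S') <= Hent P X S + Hent P X S'.
Proof.
have mS := measurable_fibers_marginal S.
have mS' := measurable_fibers_marginal S'.
rewrite !Hent_marginal; apply: le_trans (entropy_submod P (f := restrict (S `&` S'))
  (g := restrict (S `&` S')) mS mS' _); last first.
  by move=> w; rewrite !restrict_marginal ?fsubsetIl ?fsubsetIr.
apply: leeD.
  rewrite (_ : marginal _ = merge \o fun w => (marginal S w, marginal S' w)).
    exact/entropy_comp_le/measurable_fibers_pair.
  by apply/funext => w /=; rewrite merge_marginal.
rewrite (_ : marginal _ = restrict (S `&` S') \o marginal S)//.
by apply/funext => w /=; rewrite restrict_marginal// fsubsetIl.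
Qed.

Lemma Hent_fin_num : (forall v, Hent P X [fset v] < +oo) ->
  forall S, Hent P X S \is a fin_num.
Proof.
move=> H1 S; rewrite ge0_fin_numE ?Hent_ge0//.
elim/fset1U_rect: S => [|x S _ IH]; first by rewrite Hent_fset0 ltry.
apply: le_lt_trans (lte_add_pinfty (H1 x) IH).
by apply: le_trans (Hent_submod _ _); rewrite leeDl// Hent_ge0.
Qed.

Section invariance.
Variables (G : set (V -> V)) (g ginv : V -> V).
Hypotheses (X_inv : invariant_law G P X) (Gg : G g).
Hypotheses (gK : cancel g ginv) (ginvK : cancel ginv g).

Definition pullback {S : {fset V}} (x : {ffun [fset g v | v in S] -> A}) :
    {ffun S -> A} :=
  [ffun s => cfg_at x (g (val s))].

Lemma pmass_marginal_imfset S x :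
  pmass P (marginal [fset g v | v in S]) x = pmass P (marginal S) (pullback x).
Proof.
rewrite /pmass; congr fine; set gS := [fset g v | v in S].
transitivity (P [set w | forall v, v \in gS -> X v w = cfg_at x v]).
  congr (P _); apply/seteqP; split => [w <- v vgS|w Hw]; first by rewrite cfg_at_marginal.
  by apply/ffunP => i; rewrite ffunE -cfg_at_val; exact: Hw (fsvalP i).
rewrite -(X_inv g ginv Gg gK ginvK gS (cfg_at x)).
congr (P _); apply/seteqP; split => [w Hw|w Hw v /imfsetP[s /= sS ->]].
  apply/ffunP => s; rewrite !ffunE.
  by have := Hw _ (in_imfset _ _ (fsvalP s)); rewrite gK.
by rewrite gK; move/ffunP: Hw => /(_ [` sS]); rewrite !ffunE.
Qed.

Lemma pullback_inj S : injective (@pullback S).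
Proof.
move=> x1 x2 /ffunP E; apply/ffunP => i; rewrite -!cfg_at_val.
by have /imfsetP[s /= sS ->] := fsvalP i; move: (E [` sS]); rewrite !ffunE.
Qed.

Lemma Hent_imfset_le S : Hent P X [fset g v | v in S] <= Hent P X S.
Proof.
rewrite !Hent_marginal /entropy.
under eq_esum do rewrite pmass_marginal_imfset.
rewrite -(esum_image _ (@pullback S) (fun x => (negxlnx (pmass P (marginal S) x))%:E)).
  apply: ge0_subset_esum => // x _; rewrite lee_fin negxlnx_ge0// pmass_itv//.
  exact: measurable_fibers_marginal.
by move=> x1 x2 _ _; exact: pullback_inj.
Qed.

End invariance.

End marginal_entropy.

Definition submodular {R : numDomainType} {V : choiceType} (f : {fset V} -> R) :=
  forall S T, (f (S `|` T) + f (S `&` T) <= f S + f T)%R.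

Section shearer.
Context {R : realType} {V : choiceType} (f : {fset V} -> R).
Local Open Scope ring_scope.
Hypothesis f0 : f fset0 = 0.
Hypothesis f_submod : submodular f.
Hypothesis le_f : {homo f : S T / S `<=` T >-> S <= T}.

Let shearer_step (Fs : seq {fset V}) (x : V) (S : {fset V}) : x \notin S ->
  \sum_(F <- Fs) f (F `&` S) + (count (fun F => x \in F) Fs)%:R * (f (x |` S) - f S)
    <= \sum_(F <- Fs) f (F `&` (x |` S)).
Proof.
move=> xS; elim: Fs => [|F Fs IH]; first by rewrite !big_nil mul0r addr0.
rewrite !big_cons /= natrD mulrDl.
have [xF|xF] := boolP (x \in F); last first.
  suff -> : F `&` (x |` S) = F `&` S by rewrite mul0r add0r; lra.
  by apply/fsetP => y; rewrite !inE; case: eqVneq => // ->; rewrite (negPf xF).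
have := f_submod (x |` (F `&` S)) S.
have -> : (x |` (F `&` S)) `|` S = x |` S.
  by apply/fsetP => y; rewrite !inE; case: (y \in S); rewrite ?andbF ?orbT ?orbF.
have -> : (x |` (F `&` S)) `&` S = F `&` S.
  apply/fsetP => y; rewrite !inE; case: eqVneq => [->|_] /=; last by rewrite -andbA andbb.
  by move: xS; case: (x \in S); rewrite ?andbF.
have -> : F `&` (x |` S) = x |` (F `&` S).
  by apply/fsetP => y; rewrite !inE; case: eqVneq => [->|//]; rewrite xF.
rewrite mul1r; lra.
Qed.

Lemma shearer (Fs : seq {fset V}) (k : nat) (S : {fset V}) :
  (forall x, x \in S -> k <= count (fun F => x \in F) Fs)%N ->
  k%:R * f S <= \sum_(F <- Fs) f F.
Proof.
move=> cov; apply: (@le_trans _ _ (\sum_(F <- Fs) f (F `&` S))); last first.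
  by apply: ler_sum => F _; apply: le_f; exact: fsubsetIl.
elim/fset1U_rect: S cov => [|x S xS IH] cov.
  by rewrite f0 mulr0 big1// => F _; rewrite fsetI0.
have IH' := IH (fun y yS => cov y (fsubsetP (fsubsetU1 x S) y yS)).
apply: le_trans (shearer_step Fs x S xS).
have ck : k%:R <= (count (fun F => x \in F) Fs)%:R :> R by rewrite ler_nat cov// fset1U1.
have fm : f S <= f (x |` S) by apply: le_f; exact: fsubsetU1.
have : k%:R * (f (x |` S) - f S) <= (count (fun F => x \in F) Fs)%:R * (f (x |` S) - f S).
  by apply: ler_wpM2r => //; rewrite subr_ge0.
lra.
Qed.

End shearer.

Lemma leq_card_fset_set {T1 T2 : choiceType} {S1 : set T1} {S2 : set T2}
    (h : T1 -> T2) :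
  finite_set S1 -> finite_set S2 -> {in S1 &, injective h} ->
  (forall x, S1 x -> S2 (h x)) -> (#|` fset_set S1| <= #|` fset_set S2|)%N.
Proof.
move=> finS1 finS2 h_inj hS.
rewrite -(size_map h); apply: uniq_leq_size.
  rewrite map_inj_in_uniq ?fset_uniq// => x y.
  by rewrite !in_fset_set// !inE => xS yS; apply: h_inj; rewrite inE.
by move=> _ /mapP[x + ->]; rewrite !in_fset_set// !inE => /hS.
Qed.

Lemma sum_count_comm {T1 T2 : Type} (r : seq T1) (s : seq T2) (e : T1 -> T2 -> bool) :
  (\sum_(x <- r) count (e x) s = \sum_(y <- s) count (e^~ y) r)%N.
Proof.
have countE (T : Type) (a : pred T) t : count a t = (\sum_(z <- t) a z)%N.
  by rewrite -sum1_count big_mkcond.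
under eq_bigr do rewrite countE.
by rewrite exchange_big; under eq_bigr do rewrite -countE.
Qed.

Lemma count_fsubset {T : choiceType} (F S : {fset T}) :
  F `<=` S -> count (fun x => x \in F) S = #|` F|.
Proof.
move=> FS; rewrite -size_filter; apply/perm_size/uniq_perm.
- exact/filter_uniq/fset_uniq.
- exact: fset_uniq.
move=> x; rewrite mem_filter; apply/andP/idP => [[]//|xF].
by split=> //; exact: fsubsetP FS _ _.
Qed.

Lemma card_bigfcup {T : choiceType} {I : Type} (r : seq I) (F : I -> {fset T}) :
  (#|` \bigcup_(i <- r) F i| <= \sum_(i <- r) #|` F i|)%N.
Proof.
elim: r => [|i r IH]; first by rewrite !big_nil cardfs0.
by rewrite !big_cons cardfsU (leq_trans (leq_subr _ _))// leq_add2l.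
Qed.

Definition per_site {R : realType} {V : choiceType} (f : {fset V} -> R)
    (W : {fset V}) : R :=
  f W / #|` W|%:R.

Lemma ratio_bound_arith {R : realType} {n b b' c N w fD fW : R} :
  0 < n -> b < n -> 0 <= b' -> 0 < N -> 0 < w -> 0 <= fW ->
  c * fD <= (n + b') * N * fW -> (n - b) * N * w <= n * c ->
  fD / n <= fW / w * ((1 + b' / n) / (1 - b / n)).
Proof.
move=> n0 bn b'0 N0 w0 fW0 shearer_ineq count_ineq.
have nb0 : 0 < n - b by rewrite subr_gt0.
have c0 : 0 < c.
  by rewrite -(pmulr_rgt0 _ n0) (lt_le_trans _ count_ineq)// !mulr_gt0.
have -> : fW / w * ((1 + b' / n) / (1 - b / n)) =
    (n + b') * N * fW / ((n - b) * N * w).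
  by field; rewrite !gt_eqF.
have K0 : 0 <= (n + b') * N * fW by rewrite !mulr_ge0 ?addr_ge0// ltW.
apply: (@le_trans _ _ ((n + b') * N * fW / c / n)).
  by rewrite ler_pM2r ?invr_gt0// ler_pdivlMr// [leLHS]mulrC.
by rewrite -mulrA -invfM ler_wpM2l// lef_pV2 ?posrE ?mulr_gt0// [leRHS]mulrC.
Qed.

Section translate_family.
Context {V : countType} (G : set (V -> V)).
Hypotheses (hG : perm_group G) (hsn : semi_nice G).

Let G_comp {g h} : G g -> G h -> G (g \o h).
Proof. by case: hG => _ _ + _; apply. Qed.

Let G_inv {g} : G g -> exists2 h, G h & cancel g h /\ cancel h g.
Proof. by case: hG => _ _ _; apply. Qed.

Let G_inj {g} : G g -> injective g.
Proof. by move=> /G_inv[h _ [gK _]]; exact: can_inj gK. Qed.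

Let G_trans v w : exists2 g, G g & g v = w.
Proof. by case: hsn. Qed.

Let imfset_inj {g : V -> V} :
  injective g -> injective (fun S : {fset V} => [fset g v | v in S]).
Proof.
move=> g_inj S1 S2 E; apply/fsetP => y.
have gS S : (g y \in [fset g v | v in S]) = (y \in S) by rewrite mem_imfset.
by rewrite -gS E gS.
Qed.

Definition transport (v u w : V) : set V := [set g w | g in [set g | G g /\ g v = u]].

Lemma finite_transport v u w : finite_set (transport v u w).
Proof.
have [g0 Gg0 g0v] := G_trans v u; have [h0 Gh0 [g0K h0K]] := G_inv Gg0.
apply: sub_finite_set (finite_image g0 (hsn.2 v w)) => _ [g [Gg gv] <-].
exists (h0 (g w)); last by rewrite h0K.
by exists (h0 \o g) => //; split; [exact: G_comp|rewrite /= gv -g0v g0K].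
Qed.

Lemma finite_cobdry (D : {fset V}) v w : finite_set (bdry G v w (~` [set` D])).
Proof.
apply: (sub_finite_set (B := \bigcup_(x in [set` D]) transport w x v)).
  move=> _ [g [Gg [gv gw]] <-]; exists (g w); last by exists g.
  by apply: contrapT => gwD; apply: gw.
by apply: bigcup_finite => [|x _]; [exact: finite_fset|exact: finite_transport].
Qed.

Lemma finite_bdry (D : {fset V}) v w : finite_set (bdry G v w [set` D]).
Proof. by apply: sub_finite_set (finite_fset D) => _ [g [_ [gD _]] <-]. Qed.

Variables (v0 : V) (W : {fset V}).

Definition translates (u : V) : set {fset V} :=
  [set F | exists2 g, G g & g v0 = u /\ F = [fset g v | v in W]].

Definition covering (x : V) : set (V * {fset V}) :=
  [set p | translates p.1 p.2 /\ x \in p.2].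

Let translates_comp k u F : G k -> translates u F ->
  translates (k u) [fset k v | v in F].
Proof.
move=> Gk [g Gg [gv ->]]; exists (k \o g); first exact: G_comp.
split; first by rewrite /= gv.
apply/fsetP => y; apply/imfsetP/imfsetP => /=.
  by move=> [_ /imfsetP[v /= vW ->] ->]; exists v.
by move=> [v vW ->]; exists (g v) => //; exact: in_imfset.
Qed.

Lemma finite_translates u : finite_set (translates u).
Proof.
pose Q := \bigcup_(w <- W) fset_set (transport v0 u w).
apply: sub_finite_set (finite_fset (fpowerset Q)) => F [g Gg /= [gv ->]].
rewrite /= fpowersetE; apply/fsubsetP => _ /imfsetP[w /= wW ->].
apply/bigfcupP; exists w; first by rewrite wW.
by rewrite in_fset_set ?inE; [exists g|exact: finite_transport].
Qed.

Lemma finite_covering x : finite_set (covering x).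
Proof.
pose U := \bigcup_(w <- W) fset_set (transport w x v0).
pose B := (\bigcup_(u in [set` U]) (fun F => (u, F)) @` translates u)%classic.
apply: (sub_finite_set (B := B)).
  move=> [u F] [[g Gg /= [gv EF]] xF]; exists u; last by exists F => //; exists g.
  move: xF; rewrite /= EF => /imfsetP[w /= wW xw].
  apply/bigfcupP; exists w; first by rewrite wW.
  by rewrite in_fset_set ?inE; [exists g|exact: finite_transport].
apply: bigcup_finite => [|u _]; first exact: finite_fset.
exact/finite_image/finite_translates.
Qed.

Definition ntranslates := #|` fset_set (translates v0)|.
Definition ncovering := #|` fset_set (covering v0)|.

Lemma card_translates u : #|` fset_set (translates u)| = ntranslates.
Proof.
suff le u' u'' : (#|` fset_set (translates u')| <= #|` fset_set (translates u'')|)%N.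
  by apply/eqP; rewrite eqn_leq !le.
have [k Gk ku] := G_trans u' u''.
apply: (leq_card_fset_set (fun F : {fset V} => [fset k v | v in F]));
  try exact: finite_translates.
  by move=> F1 F2 _ _; exact/imfset_inj/G_inj.
by move=> F uF; rewrite -ku; exact: translates_comp.
Qed.

Lemma card_covering x : #|` fset_set (covering x)| = ncovering.
Proof.
suff le x' x'' : (#|` fset_set (covering x')| <= #|` fset_set (covering x'')|)%N.
  by apply/eqP; rewrite eqn_leq !le.
have [k Gk kx] := G_trans x' x''.
apply: (leq_card_fset_set (fun p : V * {fset V} => (k p.1, [fset k v | v in p.2])));
  try exact: finite_covering.
  by move=> [u1 F1] [u2 F2] _ _ /= [/(G_inj Gk) -> /(imfset_inj (G_inj Gk)) ->].
move=> [u F] [uF xF]; split; first exact: translates_comp.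
by rewrite /= -kx mem_imfset//; exact: G_inj.
Qed.

Definition family (U : {fset V}) : seq (V * {fset V}) :=
  [seq (u, F) | u <- U, F <- fset_set (translates u)].

Lemma family_uniq U : uniq (family U).
Proof.
apply: allpairs_uniq_dep => [|u _|[u1 F1] [u2 F2] _ _ /= [-> ->]//]; exact: fset_uniq.
Qed.

Lemma mem_family U p :
  (p \in family U) = (p.1 \in U) && `[< translates p.1 p.2 >].
Proof.
apply/allpairsPdep/andP => [[u [F [uU + ->]]]|[pU]].
  by rewrite in_fset_set ?inE ?asboolE//; exact: finite_translates.
move=> /asboolP uF; exists p.1, p.2; split=> //; last by case: p {pU uF}.
by rewrite in_fset_set ?inE; [|exact: finite_translates].
Qed.

Lemma size_family U : size (family U) = (#|` U| * ntranslates)%N.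
Proof.
rewrite size_allpairs_dep sumnE big_map; under eq_bigr do rewrite card_translates.
by rewrite big_const_seq count_predT iter_addn_0 mulnC.
Qed.

Lemma count_family_le U x : (count (fun p => x \in p.2) (family U) <= ncovering)%N.
Proof.
rewrite -(card_covering x) -size_filter; apply: uniq_leq_size.
  exact/filter_uniq/family_uniq.
move=> p; rewrite mem_filter mem_family in_fset_set ?inE; last exact: finite_covering.
by case/andP=> xp /andP[_ /asboolP].
Qed.

Lemma count_family_ge U x : (forall u F, translates u F -> x \in F -> u \in U) ->
  (ncovering <= count (fun p => x \in p.2) (family U))%N.
Proof.
move=> anchorU; rewrite -(card_covering x) -size_filter.
apply: uniq_leq_size; first exact: fset_uniq.
move=> p; rewrite in_fset_set ?inE; last exact: finite_covering.
move=> [uF xF]; rewrite mem_filter xF mem_family (anchorU _ _ uF xF).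
exact/asboolP.
Qed.

Lemma ntranslates_gt0 : (0 < ntranslates)%N.
Proof.
rewrite cardfs_gt0; apply/fset0Pn; exists W.
rewrite in_fset_set ?inE; last exact: finite_translates.
by exists id; [case: hG|split=> //; rewrite imfset_id].
Qed.

Definition bdry_size (D : {fset V}) : nat :=
  \sum_(w <- W) #|` fset_set (bdry G v0 w [set` D])|.

Definition cobdry_size (D : {fset V}) : nat :=
  \sum_(w <- W) #|` fset_set (bdry G v0 w (~` [set` D]))|.

Definition boundary_factor {R : realType} (D : {fset V}) : R :=
  (1 + (cobdry_size D)%:R / #|` D|%:R) / (1 - (bdry_size D)%:R / #|` D|%:R).

Section boundary_estimates.
Variable D : {fset V}.

Let inner := \bigcup_(w <- W) fset_set (bdry G v0 w [set` D]).
Let outer := \bigcup_(w <- W) fset_set (bdry G v0 w (~` [set` D])).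

Let anchor_mem u F x :
  translates u F -> x \in F -> x \in D -> u \in D `|` outer.
Proof.
move=> [g Gg [gu EF]] + xD; rewrite EF => /imfsetP[w /= wW xw].
rewrite in_fsetU; have [//|uD /=] := boolP (u \in D).
apply/bigfcupP; exists w; first by rewrite wW.
rewrite in_fset_set ?inE; last exact: finite_cobdry.
by exists g => //; split=> //; rewrite gu -xw; split=> //; exact/negP.
Qed.

Let translate_sub u F : translates u F -> u \in D -> u \notin inner -> F `<=` D.
Proof.
move=> [g Gg [gu ->]] uD u_inner; apply/fsubsetP => _ /imfsetP[w /= wW ->].
apply/negPn/negP => gwD; apply: (negP u_inner).
apply/bigfcupP; exists w; first by rewrite wW.
rewrite in_fset_set ?inE; last exact: finite_bdry.
by exists g => //; split=> //; rewrite gu; split=> //; exact/negP.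
Qed.

Lemma translates_inside_count :
  ((#|` D| - bdry_size D) * ntranslates * #|` W| <= #|` D| * ncovering)%N.
Proof.
set U := D `\` inner.
have card_U : (#|` D| - bdry_size D <= #|` U|)%N.
  rewrite cardfsD leq_sub2l// (leq_trans _ (card_bigfcup _ _))//.
  exact/fsubset_leq_card/fsubsetIr.
have count_W p : p \in family U -> count (fun x => x \in p.2) D = #|` W|.
  rewrite mem_family in_fsetD => /andP[/andP[u_inner uD] /asboolP uF].
  rewrite count_fsubset; last exact: translate_sub uF uD u_inner.
  by case: uF => g Gg [_ ->]; rewrite card_imfset//; exact: G_inj.
apply: leq_trans (_ : \sum_(x <- D) count (fun p => x \in p.2) (family U) <= _)%N.
  rewrite (sum_count_comm _ _ (fun (x : V) (p : V * {fset V}) => x \in p.2)).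
  rewrite big_seq (eq_bigr _ count_W) -big_seq big_const_seq count_predT.
  by rewrite iter_addn_0 size_family [X in (_ <= X)%N]mulnC !leq_mul2r card_U !orbT.
apply: (@leq_trans (\sum_(x <- D) ncovering)).
  by apply: leq_sum => x _; exact: count_family_le.
by rewrite big_const_seq count_predT iter_addn_0 mulnC.
Qed.

Section shearer_bound.
Context {R : realType} (f : {fset V} -> R).
Local Open Scope ring_scope.
Hypotheses (f0 : f fset0 = 0) (f_submod : submodular f).
Hypothesis le_f : {homo f : S T / S `<=` T >-> S <= T}.
Hypothesis f_imfset : forall g, G g -> f [fset g v | v in W] <= f W.

Lemma shearer_translates :
  ncovering%:R * f D <= (#|` D| + cobdry_size D)%:R * ntranslates%:R * f W.
Proof.
set U := D `|` outer.
have fW_ge0 : 0 <= f W by rewrite -f0 le_f// fsub0set.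
apply: le_trans (_ : \sum_(F <- map snd (family U)) f F <= _).
  apply: shearer => // x xD; rewrite count_map.
  by apply: count_family_ge => u F uF xF; exact: anchor_mem uF xF xD.
apply: le_trans (_ : \sum_(F <- map snd (family U)) f W <= _).
  rewrite big_map [leRHS]big_map big_seq_cond [leRHS]big_seq_cond.
  apply: ler_sum => p /andP[+ _]; rewrite mem_family => /andP[_ /asboolP[g Gg [_ ->]]].
  exact: f_imfset.
rewrite big_const_seq count_predT iter_addr_0 size_map size_family.
rewrite -[f W *+ _]mulr_natl natrM ler_wpM2r// ler_wpM2r// ler_nat.
by rewrite cardfsU (leq_trans (leq_subr _ _))// leq_add2l card_bigfcup.
Qed.

Lemma per_site_le_boundary : W != fset0 -> (bdry_size D < #|` D|)%N ->
  per_site f D <= per_site f W * boundary_factor D.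
Proof.
move=> W0 bD; have D0 : (0 < #|` D|)%N by apply: leq_ltn_trans bD.
apply: (ratio_bound_arith (c := ncovering%:R) (N := ntranslates%:R)).
- by rewrite ltr0n.
- by rewrite ltr_nat.
- by rewrite ler0n.
- by rewrite ltr0n ntranslates_gt0.
- by rewrite ltr0n cardfs_gt0.
- by rewrite -f0 le_f// fsub0set.
- by rewrite -natrD; exact: shearer_translates.
- by rewrite -(natrB _ (ltnW bD)) -!natrM ler_nat; exact: translates_inside_count.
Qed.

End shearer_bound.

End boundary_estimates.

End translate_family.

Lemma cvg_sum_div0 {R : realType} (I : Type) (r : seq I) (a : I -> nat -> R)
    (d : nat -> R) :
  (forall i, (fun n => a i n / d n) @ \oo --> 0) ->
  (fun n => (\sum_(i <- r) a i n) / d n) @ \oo --> 0.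
Proof.
move=> a0; under eq_fun do rewrite mulr_suml.
suff : (fun n => \sum_(i <- r) a i n / d n) @ \oo --> \sum_(i <- r) (0 : R).
  by rewrite big1_eq.
by apply: cvg_big => //; exact: add_continuous.
Qed.

Section per_site_limit.
Context {R : realType} {V : countType} (G : set (V -> V)).
Local Open Scope ring_scope.
Hypotheses (hG : perm_group G) (hsn : semi_nice G).
Variable f : {fset V} -> R.
Hypotheses (f0 : f fset0 = 0) (f_submod : submodular f).
Hypothesis le_f : {homo f : S T / S `<=` T >-> S <= T}.
Hypothesis f_imfset : forall W g, G g -> f [fset g v | v in W] <= f W.
Variable Vn : nat -> {fset V}.
Hypothesis Vn_coFolner : coFolner R G Vn.

Let Vn_neq0 n : Vn n != fset0. Proof. exact: Vn_coFolner.1. Qed.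

Lemma per_site_ge0 W : 0 <= per_site f W.
Proof. by rewrite divr_ge0// -f0 le_f// fsub0set. Qed.

Lemma cvg_bdry_size v0 W :
  (fun n => (bdry_size G v0 W (Vn n))%:R / #|` Vn n|%:R) @ \oo --> (0 : R).
Proof.
under eq_fun do rewrite natr_sum.
by apply: cvg_sum_div0 => w; exact: (Vn_coFolner.2 v0 w).2.2.1.
Qed.

Lemma cvg_cobdry_size v0 W :
  (fun n => (cobdry_size G v0 W (Vn n))%:R / #|` Vn n|%:R) @ \oo --> (0 : R).
Proof.
under eq_fun do rewrite natr_sum.
by apply: cvg_sum_div0 => w; exact: (Vn_coFolner.2 v0 w).2.2.2.
Qed.

Lemma cvg_boundary_factor v0 W :
  (fun n => boundary_factor G v0 W (Vn n)) @ \oo --> (1 : R).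
Proof.
have := cvgM (cvgD (cvg_cst (1 : R)) (cvg_cobdry_size v0 W))
  (cvgV _ (cvgB (cvg_cst (1 : R)) (cvg_bdry_size v0 W))).
by rewrite addr0 subr0 invr1 mulr1; apply; rewrite oner_neq0.
Qed.

Lemma per_site_eventually_lt W e : W != fset0 -> 0 < e ->
  \forall n \near \oo, per_site f (Vn n) < per_site f W + e.
Proof.
move=> W0 e0; have /fset0Pn[v0 _] := W0.
have factor : (fun n => per_site f W * boundary_factor G v0 W (Vn n)) @ \oo -->
    per_site f W.
  rewrite -[X in _ --> X]mulr1; apply: cvgM; first exact: cvg_cst.
  exact: cvg_boundary_factor.
have factor_lt := cvgr_lt _ factor (per_site f W + e) ltac:(by rewrite ltrDl).
near=> n.
have D0 : (0 < #|` Vn n|%:R :> R) by rewrite ltr0n cardfs_gt0.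
have bD : (bdry_size G v0 W (Vn n) < #|` Vn n|)%N.
  rewrite -(ltr_nat R) -[ltRHS]mul1r -ltr_pdivrMr//.
  by near: n; exact: cvgr_lt (cvg_bdry_size v0 W) _ ltr01.
have := per_site_le_boundary _ hG hsn v0 W _ _ f0 f_submod le_f (f_imfset W) W0 bD.
move=> /le_lt_trans; apply.
by near: n; exact: factor_lt.
Unshelve. all: by end_near.
Qed.

Theorem cvg_per_site : (fun n => per_site f (Vn n)) @ \oo -->
  inf [set per_site f W | W in [set W | W != fset0]].
Proof.
set S := [set per_site f W | W in _].
have S_inf : has_inf S.
  split; first by exists (per_site f (Vn 0)), (Vn 0) => //; exact: Vn_neq0.
  by exists 0 => _ [W _ <-]; exact: per_site_ge0.
apply/cvgrPdist_lt => e e0.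
have e2 : 0 < e / 2 by rewrite divr_gt0.
have [_ [W W0 <-] hW] := inf_adherent e2 S_inf.
near=> n.
have inf_le : inf S <= per_site f (Vn n).
  by apply: ge_inf S_inf.2 _ _; exists (Vn n) => //; exact: Vn_neq0.
have : per_site f (Vn n) < per_site f W + e / 2.
  by near: n; exact: per_site_eventually_lt.
by rewrite ler0_norm ?subr_le0// opprB; lra.
Unshelve. all: by end_near.
Qed.

End per_site_limit.

Section entropy_per_site.
Context {V A : countType} {d : measure_display} {Omega : measurableType d}
  {R : realType} (P : probability Omega R) (X : V -> Omega -> A) (G : set (V -> V)).
Hypotheses (hG : perm_group G) (mX : random_field X) (X_inv : invariant_law G P X).
Hypothesis Hent1_lty : forall v, (Hent P X [fset v] < +oo)%E.

Definition fHent (S : {fset V}) : R := fine (Hent P X S).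

Lemma HentE S : Hent P X S = (fHent S)%:E.
Proof. by rewrite /fHent fineK// Hent_fin_num. Qed.

Lemma fHent_fset0 : fHent fset0 = 0.
Proof. by rewrite /fHent Hent_fset0. Qed.

Lemma fHent_submod : submodular fHent.
Proof. by move=> S T; rewrite -lee_fin !EFinD -!HentE Hent_submod. Qed.

Lemma le_fHent : {homo fHent : S T / S `<=` T >-> S <= T}.
Proof. by move=> S T ST; rewrite -lee_fin -!HentE le_Hent. Qed.

Lemma fHent_imfset W g : G g -> fHent [fset g v | v in W] <= fHent W.
Proof.
move=> Gg; have [_ _ _ /(_ g Gg)[ginv _ [gK ginvK]]] := hG.
by rewrite -lee_fin -!HentE (Hent_imfset_le _ _ mX _ _ _ X_inv Gg gK ginvK).
Qed.

Lemma hrateE (v : V) :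
  hrate P X = (inf [set per_site fHent W | W in [set W | W != fset0]])%:E.
Proof.
rewrite -ereal_inf_EFin; last 2 first.
- by exists 0 => _ [W _ <-]; rewrite divr_ge0// -fHent_fset0 le_fHent// fsub0set.
- exists (per_site fHent [fset v]), [fset v] => //.
  by apply/fset0Pn; exists v; rewrite fset11.
rewrite /hrate image_comp; congr ereal_inf; apply: eq_imagel => W _.
by rewrite HentE.
Qed.

End entropy_per_site.

Theorem corollary5p8 (R : realType) (V A : countType) (G : set (V -> V))
  (d : measure_display) (Omega : measurableType d) (P : probability Omega R)
  (X : V -> Omega -> A) :
  perm_group G -> semi_nice G -> process G P X ->
  (forall v : V, (Hent P X [fset v] < +oo)%E) ->
  forall Vn : nat -> {fset V}, coFolner R G Vn ->
  (fun n => (Hent P X (Vn n) * ((#|` Vn n|%:R)^-1)%:E)%E) @ \oo --> hrate P X.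
Proof.
move=> hG hsn [mX X_inv] Hent1_lty Vn Vn_coFolner.
have /fset0Pn[v _] := Vn_coFolner.1 0.
rewrite (hrateE P X mX Hent1_lty v).
under eq_fun do rewrite (HentE P X mX Hent1_lty) -EFinM.
apply: cvg_EFin; first exact: nearW.
apply: (cvg_per_site G hG hsn _ _ _ _ _ _ Vn_coFolner).
- exact: fHent_fset0.
- exact: fHent_submod.
- exact: le_fHent.
- by move=> W g; exact: fHent_imfset.
Qed.
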